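(* Let $G$ be a $g$-barrelled convergence group and $H$ a locally compact convergence group. Then every compact subset of $\Gamma_s(G,\Gamma_c H)$ is equicontinuous, i.e. equicontinuous as a subset of $\Gamma(G,\Gamma_c H)$.
   Context: All groups are abelian. A convergence structure on a set $X$ assigns to each $x$ a collection of filters converging to $x$. This assignment must satisfy three conditions: point ultrafilters converge to their point; finite intersections of filters converging to $x$ converge to $x$; and finer filters of convergent filters converge. A map is continuous if it sends filters converging to $x$ to filters converging to the image of $x$. A convergence group is an abelian group with a convergence structure such that $\mathcal F\to x$, $\mathcal G\to y$ imply $\mathcal F-\mathcal G\to x-y$. A convergence space is Hausdorff if every filter has at most one limit. A subset $K$ is compact if every ultrafilter containing $K$ converges to a point of $K$. A convergence space is locally compact if it is Hausdorff and each convergent filter contains a compact set. $\mathbb T=\mathbb R/\mathbb Z$. For convergence groups $G,L$, $\Gamma(G,L)$ is the group of continuous homomorphisms $G\to L$. $\Gamma_s(G,L)$ is $\Gamma(G,L)$ with the initial topology (or convergence structure) of pointwise convergence. $\Gamma_c(G,L)$ is $\Gamma(G,L)$ with the continuous convergence structure: $\Phi\to\varphi$ iff for every $\mathcal F\to x$ in $G$, the filter generated by $\{\{\psi(y):\psi\in A,y\in F\}:A\in\Phi,F\in\mathcal F\}$ converges to $\varphi(x)$ in $L$. Write $\Gamma_c H=\Gamma_c(H,\mathbb T)$ and $\Gamma_s G=\Gamma_s(G,\mathbb T)$. A set $M\subseteq\Gamma(G,L)$ is equicontinuous if for every filter $\mathcal F\to0$ in $G$, the filter $M(\mathcal F)$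 generated by the sets $\{\varphi(x):\varphi\in M,x\in F\}$, $F\in\mathcal F$, converges to $0$ in $L$. A convergence group $G$ is $g$-barrelled if every compact subset of $\Gamma_s G$ is equicontinuous. *)

From Stdlib Require Import Reals Lra ClassicalEpsilon Classical ProofIrrelevance.
Open Scope R_scope.

Definition set (X : Type) := X -> Prop.
Definition filt (X : Type) := set X -> Prop.

Definition is_filter {X : Type} (F : filt X) : Prop :=
  F (fun _ => True) /\ ~ F (fun _ => False) /\
  (forall A B : set X, F A -> (forall x, A x -> B x) -> F B) /\
  (forall A B : set X, F A -> F B -> F (fun x => A x /\ B x)).

Definition is_ultrafilter {X : Type} (U : filt X) : Prop :=
  is_filter U /\ forall A : set X, U A \/ U (fun x => ~ A x).

Definition pt_filter {X : Type} (x : X) : filt X := fun A => A x.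

Definition filt_le {X : Type} (F G : filt X) : Prop := forall A, F A -> G A.

Definition filt_inter {X : Type} (F G : filt X) : filt X := fun A => F A /\ G A.

Definition fmap {X Y : Type} (f : X -> Y) (F : filt X) : filt Y :=
  fun B => F (fun x => B (f x)).

Definition is_convergence {X : Type} (conv : filt X -> X -> Prop) : Prop :=
  (forall x, conv (pt_filter x) x) /\
  (forall F G x, is_filter F -> is_filter G -> conv F x -> conv G x ->
     conv (filt_inter F G) x) /\
  (forall F G x, is_filter F -> is_filter G -> filt_le F G -> conv F x -> conv G x).

Definition continuous_map {X Y : Type} (cX : filt X -> X -> Prop)
  (cY : filt Y -> Y -> Prop) (f : X -> Y) : Prop :=
  forall F x, is_filter F -> cX F x -> cY (fmap f F) (f x).

Definition hausdorff {X : Type} (conv : filt X -> X -> Prop) : Prop :=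
  forall F x y, is_filter F -> conv F x -> conv F y -> x = y.

Definition compact {X : Type} (conv : filt X -> X -> Prop) (K : set X) : Prop :=
  forall U, is_ultrafilter U -> U K -> exists x, K x /\ conv U x.

Definition locally_compact {X : Type} (conv : filt X -> X -> Prop) : Prop :=
  hausdorff conv /\
  forall F x, is_filter F -> conv F x -> exists K, F K /\ compact conv K.

Record cgdata := CGData {
  car :> Type;
  cadd : car -> car -> car;
  copp : car -> car;
  czero : car;
  cconv : filt car -> car -> Prop }.

Definition filt_sub (G : cgdata) (F1 F2 : filt G) : filt G :=
  fun C => exists A B, F1 A /\ F2 B /\
     forall a b, A a -> B b -> C (cadd G a (copp G b)).

Definition is_cgroup (G : cgdata) : Prop :=
  (forall x y z : G, cadd G x (cadd G y z) = cadd G (cadd G x y) z) /\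
  (forall x y : G, cadd G x y = cadd G y x) /\
  (forall x : G, cadd G x (czero G) = x) /\
  (forall x : G, cadd G x (copp G x) = czero G) /\
  is_convergence (cconv G) /\
  (forall F1 F2 x y, is_filter F1 -> is_filter F2 ->
     cconv G F1 x -> cconv G F2 y ->
     cconv G (filt_sub G F1 F2) (cadd G x (copp G y))).

Definition is_hom (G L : cgdata) (f : G -> L) : Prop :=
  forall x y, f (cadd G x y) = cadd L (f x) (f y).

Definition cont_hom (G L : cgdata) (f : G -> L) : Prop :=
  is_hom G L f /\ continuous_map (cconv G) (cconv L) f.

Definition Gam (G L : cgdata) : Type := {f : G -> L | cont_hom G L f}.

Definition GammaS_conv (G L : cgdata) : filt (Gam G L) -> Gam G L -> Prop :=
  fun Phi phi => forall x : G,
    cconv L (fmap (fun psi : Gam G L => proj1_sig psi x) Phi) (proj1_sig phi x).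

Definition eval_filter {G L : cgdata} (Phi : filt (Gam G L)) (F : filt G) : filt L :=
  fun C => exists A F', Phi A /\ F F' /\
     forall (psi : Gam G L) (y : G), A psi -> F' y -> C (proj1_sig psi y).

Definition GammaC_conv (G L : cgdata) : filt (Gam G L) -> Gam G L -> Prop :=
  fun Phi phi => forall (F : filt G) (x : G), is_filter F -> cconv G F x ->
    cconv L (eval_filter Phi F) (proj1_sig phi x).

Definition set_image_filter {G L : cgdata} (M : set (Gam G L)) (F : filt G) : filt L :=
  fun C => exists F', F F' /\
     forall (psi : Gam G L) (y : G), M psi -> F' y -> C (proj1_sig psi y).

Definition equicontinuous (G L : cgdata) (M : set (Gam G L)) : Prop :=
  forall F : filt G, is_filter F -> cconv G F (czero G) ->
    cconv L (set_image_filter M F) (czero L).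

(** * The circle group T = R/Z, represented by [0,1) *)
Definition Tcar : Type := {x : R | 0 <= x < 1}.

Lemma frac_in (r : R) : 0 <= frac_part r < 1.
Proof. destruct (base_fp r). lra. Qed.

Definition Tmk (r : R) : Tcar := exist _ (frac_part r) (frac_in r).
Definition Tadd (a b : Tcar) : Tcar := Tmk (proj1_sig a + proj1_sig b).
Definition Topp (a : Tcar) : Tcar := Tmk (- proj1_sig a).

Lemma zero_in : 0 <= 0 < 1.
Proof. lra. Qed.
Definition Tzero : Tcar := exist _ 0 zero_in.

Definition dT (s t : Tcar) : R :=
  let u := frac_part (proj1_sig s - proj1_sig t) in Rmin u (1 - u).

(* quotient topology of R/Z, as a convergence: the filter contains all balls *)
Definition Tconv (F : filt Tcar) (t : Tcar) : Prop :=
  forall eps, 0 < eps -> F (fun s => dT s t < eps).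

Definition TT : cgdata := CGData Tcar Tadd Topp Tzero Tconv.

(* For the pointwise operations on Gamma(H,T)
   the first branch is always taken (Gamma(H,T) is closed under pointwise
   operations since T is a convergence group); this is only a device to avoid
   putting that closure proof into the definitions. *)
Definition glift {X : Type} {P : X -> Prop} (f : X) (d : sig P) : sig P :=
  match excluded_middle_informative (P f) with
  | left p => exist P f p
  | right _ => d
  end.

Definition Gadd (H : cgdata) (phi psi : Gam H TT) : Gam H TT :=
  glift (fun h => Tadd (proj1_sig phi h) (proj1_sig psi h)) phi.
Definition Gopp (H : cgdata) (phi : Gam H TT) : Gam H TT :=
  glift (fun h => Topp (proj1_sig phi h)) phi.

Lemma Tzero_hom : Tzero = Tadd Tzero Tzero.
Proof.
  unfold Tadd, Tmk, Tzero; simpl.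
  assert (E : frac_part (0 + 0) = 0) by (rewrite Rplus_0_l; apply fp_R0).
  generalize zero_in. generalize (frac_in (0 + 0)). rewrite E. intros p q.
  f_equal. apply proof_irrelevance.
Qed.

Lemma zero_cont_hom (H : cgdata) : cont_hom H TT (fun _ => Tzero).
Proof.
  split.
  - intros x y. exact Tzero_hom.
  - intros F x HF _ eps Heps. unfold fmap. simpl.
    destruct HF as [HT [_ [Hup _]]].
    apply (Hup (fun _ => True)); [exact HT|].
    intros _ _. unfold dT; simpl. rewrite Rminus_diag, fp_R0.
    unfold Rmin; destruct (Rle_dec 0 (1 - 0)); lra.
Qed.

Definition Gzero (H : cgdata) : Gam H TT := exist _ (fun _ => Tzero) (zero_cont_hom H).

Definition GammaCH (H : cgdata) : cgdata :=
  CGData (Gam H TT) (Gadd H) (Gopp H) (Gzero H) (GammaC_conv H TT).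

Definition g_barrelled (G : cgdata) : Prop :=
  forall K : set (Gam G TT), compact (GammaS_conv G TT) K -> equicontinuous G TT K.

(* Every k in Gamma(G, Gamma_c H) and h in H give a character
   ev k h = (x |-> k(x)(h)) in Gamma(G, T).  The proof has three parts.
   1. Arithmetic of T = R/Z: the pointwise sum of two continuous characters
      of H is again one, so addition in Gamma_c H really is pointwise; this
      makes ev k h additive.
   2. Evaluation (k, h) |-> ev k h is jointly continuous from
      Gamma_s(G, Gamma_c H) x H to Gamma_s(G, T) (this is exactly continuous
      convergence), so, by a general fact on images of products of compact
      sets, KC = {ev k h : k in K, h in C} is compact in Gamma_s G whenever
      C is compact in H.
   3. Equicontinuity of K in Gamma(G, Gamma_c H) follows as soon as every
      convergent filter of H contains a set C whose slice KC is
      equicontinuous; local compactness of H and g-barrelledness of G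
      supply such sets. *)
From Stdlib Require Import Reals Lra Lia ClassicalEpsilon Classical ProofIrrelevance.
Open Scope R_scope.

Lemma frac_part_add_IZR (r : R) (z : Z) : frac_part (r + IZR z) = frac_part r.
Proof.
  assert (E : Int_part (r + IZR z) = (Int_part r + z)%Z).
  { symmetry. apply Int_part_spec. rewrite plus_IZR.
    destruct (base_Int_part r). lra. }
  unfold frac_part. rewrite E, plus_IZR. lra.
Qed.

Lemma frac_part_offset (r : R) : exists z, frac_part r = r + IZR z.
Proof. exists (- Int_part r)%Z. unfold frac_part. rewrite opp_IZR. lra. Qed.

Lemma Tmk_congr (r s : R) (z : Z) : r = s + IZR z -> Tmk r = Tmk s.
Proof.
  intros ->. unfold Tmk. generalize (frac_in (s + IZR z)) (frac_in s).
  rewrite frac_part_add_IZR. intros p q. f_equal. apply proof_irrelevance.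
Qed.

Lemma Tmk_frac_l (r s : R) : Tmk (frac_part r + s) = Tmk (r + s).
Proof.
  destruct (frac_part_offset r) as [z E]. rewrite E.
  apply (Tmk_congr _ _ z). ring.
Qed.

Lemma Tmk_frac_r (r s : R) : Tmk (r + frac_part s) = Tmk (r + s).
Proof. rewrite (Rplus_comm r), (Rplus_comm r). apply Tmk_frac_l. Qed.

(* Medial law of T: the pointwise sum of two homomorphisms is one. *)
Lemma Tadd_swap (a b c d : Tcar) :
  Tadd (Tadd a b) (Tadd c d) = Tadd (Tadd a c) (Tadd b d).
Proof.
  unfold Tadd at 1 4. simpl. rewrite !Tmk_frac_l, !Tmk_frac_r.
  f_equal. ring.
Qed.

(* Distance from a real number to the nearest integer; [dT s t] is
   [dist_int (s - t)] by definition. *)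
Definition dist_int (r : R) : R := Rmin (frac_part r) (1 - frac_part r).

Lemma dist_int_le (r : R) (n : Z) : dist_int r <= Rabs (r - IZR n).
Proof.
  unfold dist_int. pose proof (base_fp r) as Hb.
  pose proof (Rplus_Int_part_frac_part r) as Hr.
  set (m := Int_part r) in *. set (u := frac_part r) in *.
  destruct (Z.le_gt_cases n m) as [H|H].
  - apply IZR_le in H. apply Rle_trans with u; [apply Rmin_l|].
    rewrite Rabs_right; lra.
  - assert (H' : (m + 1 <= n)%Z) by lia. apply IZR_le in H'. rewrite plus_IZR in H'.
    apply Rle_trans with (1 - u); [apply Rmin_r|].
    rewrite Rabs_left1; lra.
Qed.

Lemma dist_int_attained (r : R) : exists n, dist_int r = Rabs (r - IZR n).
Proof.
  unfold dist_int. pose proof (base_fp r) as Hb.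
  pose proof (Rplus_Int_part_frac_part r) as Hr.
  set (m := Int_part r) in *. set (u := frac_part r) in *.
  unfold Rmin. destruct (Rle_dec u (1 - u)).
  - exists m. rewrite Rabs_right; lra.
  - exists (m + 1)%Z. rewrite plus_IZR. rewrite Rabs_left1; lra.
Qed.

Lemma dist_int_add (r s : R) : dist_int (r + s) <= dist_int r + dist_int s.
Proof.
  destruct (dist_int_attained r) as [n Hn], (dist_int_attained s) as [m Hm].
  rewrite Hn, Hm. eapply Rle_trans; [apply (dist_int_le _ (n + m)%Z)|].
  rewrite plus_IZR.
  replace (r + s - (IZR n + IZR m)) with ((r - IZR n) + (s - IZR m)) by ring.
  apply Rabs_triang.
Qed.

Lemma dist_int_congr (r s : R) (z : Z) : r = s + IZR z -> dist_int r = dist_int s.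
Proof. intros ->. unfold dist_int. rewrite frac_part_add_IZR. reflexivity. Qed.

Lemma dT_add (a b c d : Tcar) : dT (Tadd a b) (Tadd c d) <= dT a c + dT b d.
Proof.
  change (dist_int (frac_part (proj1_sig a + proj1_sig b)
                    - frac_part (proj1_sig c + proj1_sig d))
          <= dist_int (proj1_sig a - proj1_sig c) + dist_int (proj1_sig b - proj1_sig d)).
  destruct (frac_part_offset (proj1_sig a + proj1_sig b)) as [z1 E1].
  destruct (frac_part_offset (proj1_sig c + proj1_sig d)) as [z2 E2].
  rewrite E1, E2, (dist_int_congr _ ((proj1_sig a - proj1_sig c)
                                      + (proj1_sig b - proj1_sig d)) (z1 - z2)).
  - apply dist_int_add.
  - rewrite minus_IZR. ring.
Qed.

Lemma sum_cont_hom (H : cgdata) (phi psi : Gam H TT) :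
  cont_hom H TT (fun h => Tadd (proj1_sig phi h) (proj1_sig psi h)).
Proof.
  destruct phi as [f [Hf Cf]], psi as [g [Hg Cg]]; simpl. split.
  - intros x y. simpl. rewrite Hf, Hg. apply Tadd_swap.
  - intros F x HF Hx eps Heps.
    pose proof (Cf F x HF Hx (eps/2) ltac:(lra)) as Nf.
    pose proof (Cg F x HF Hx (eps/2) ltac:(lra)) as Ng.
    unfold fmap in *. simpl in *.
    destruct HF as [_ [_ [Hup Hint]]].
    eapply Hup; [apply (Hint _ _ Nf Ng)|].
    simpl. intros y [Bf Bg]. pose proof (dT_add (f y) (g y) (f x) (g x)). lra.
Qed.

Lemma Gadd_val (H : cgdata) (phi psi : Gam H TT) (h : H) :
  proj1_sig (Gadd H phi psi) h = Tadd (proj1_sig phi h) (proj1_sig psi h).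
Proof.
  unfold Gadd, glift.
  destruct (excluded_middle_informative _) as [p|n]; [reflexivity|].
  exfalso. apply n. apply sum_cont_hom.
Qed.

(* The filter generated by {e a b : a in P, b in Q}, P in A, Q in B.  With
   [e] the evaluation map this is [eval_filter]. *)
Definition filt_image2 {X Y Z : Type} (e : X -> Y -> Z) (A : filt X) (B : filt Y)
  : filt Z :=
  fun W => exists P Q, A P /\ B Q /\ forall a b, P a -> Q b -> W (e a b).

Definition image2 {X Y Z : Type} (e : X -> Y -> Z) (K : set X) (C : set Y) : set Z :=
  fun z => exists x y, K x /\ C y /\ z = e x y.

Lemma fmap_ultra {X Y : Type} (f : X -> Y) (U : filt X) :
  is_ultrafilter U -> is_ultrafilter (fmap f U).
Proof.
  intros [[HT [Hne [Hup Hint]]] Hult]. unfold fmap.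
  split; [split; [|split; [|split]]|].
  - exact HT.
  - exact Hne.
  - intros A B HA HB. apply (Hup _ _ HA). intros x; apply HB.
  - intros A B HA HB. apply (Hint _ _ HA HB).
  - intro A. apply (Hult (fun x => A (f x))).
Qed.

Lemma pt_is_filter {X : Type} (x : X) : is_filter (pt_filter x).
Proof. unfold pt_filter; repeat split; auto. Qed.

(* A set charged by an ultrafilter is nonempty, so [image2 e K C] admits a
   section into K x C. *)
Lemma image2_section {X Y Z : Type} (e : X -> Y -> Z) (K : set X) (C : set Y)
  (U : filt Z) :
  is_ultrafilter U -> U (image2 e K C) ->
  exists s : Z -> X * Y, forall z, image2 e K C z ->
    K (fst (s z)) /\ C (snd (s z)) /\ z = e (fst (s z)) (snd (s z)).
Proof.
  intros [[_ [Hne [Hup _]]] _] HUK.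
  assert (Inh : exists x0 y0, K x0 /\ C y0).
  { apply NNPP; intro N. apply Hne. apply (Hup _ _ HUK).
    intros z [x [y [Kx [Cy _]]]]. apply N. eauto. }
  destruct Inh as [x0 [y0 _]].
  assert (Sec : forall z, exists p : X * Y,
             image2 e K C z -> K (fst p) /\ C (snd p) /\ z = e (fst p) (snd p)).
  { intro z. destruct (classic (image2 e K C z)) as [[x [y [Kx [Cy E]]]]|N].
    - exists (x, y). auto.
    - exists (x0, y0). intro; contradiction. }
  exact (choice _ Sec).
Qed.

(* The image of K x C under a jointly continuous map is compact when K and C
   are (only upward closure of the target convergence is needed). *)
Lemma compact_image2 {X Y Z : Type} (cX : filt X -> X -> Prop)
  (cY : filt Y -> Y -> Prop) (cZ : filt Z -> Z -> Prop) (e : X -> Y -> Z)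
  (K : set X) (C : set Y) :
  (forall F W z, is_filter W -> filt_le F W -> cZ F z -> cZ W z) ->
  (forall A B x y, is_ultrafilter A -> is_ultrafilter B -> cX A x -> cY B y ->
     cZ (filt_image2 e A B) (e x y)) ->
  compact cX K -> compact cY C -> compact cZ (image2 e K C).
Proof.
  intros Hmono Hcont hK hC U HU HUK.
  destruct (image2_section e K C U HU HUK) as [s Hs].
  pose proof HU as [[_ [_ [Hup Hint]]] _].
  destruct (hK (fmap (fun z => fst (s z)) U)) as [x [Kx Cx]].
  { apply fmap_ultra, HU. }
  { apply (Hup _ _ HUK). intros z Hz. apply (Hs z Hz). }
  destruct (hC (fmap (fun z => snd (s z)) U)) as [y [Cy Cyy]].
  { apply fmap_ultra, HU. }
  { apply (Hup _ _ HUK). intros z Hz. apply (Hs z Hz). }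
  exists (e x y). split; [exists x, y; auto|].
  apply (Hmono (filt_image2 e (fmap (fun z => fst (s z)) U) (fmap (fun z => snd (s z)) U))
           _ _ (proj1 HU)); [|apply Hcont; auto; apply fmap_ultra, HU].
  intros W [P [Q [HP [HQ HW]]]]. unfold fmap in HP, HQ.
  apply (Hup _ _ (Hint _ _ HUK (Hint _ _ HP HQ))).
  intros z [Hz [Pz Qz]]. destruct (Hs z Hz) as [_ [_ E]].
  rewrite E. exact (HW _ _ Pz Qz).
Qed.

Lemma GammaS_conv_mono (G : cgdata) (Phi Psi : filt (Gam G TT)) (phi : Gam G TT) :
  is_filter Psi -> filt_le Phi Psi -> GammaS_conv G TT Phi phi ->
  GammaS_conv G TT Psi phi.
Proof. intros _ Hle Hc x eps Heps. apply Hle, (Hc x eps Heps). Qed.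

Section Evaluation.
Variables (G H : cgdata).
(* The only convergence axiom of H needed: point filters converge. *)
Hypothesis pt_conv : forall h : H, cconv H (pt_filter h) h.

Lemma ev_cont_hom (k : Gam G (GammaCH H)) (h : H) :
  cont_hom G TT (fun x => proj1_sig (proj1_sig k x) h).
Proof.
  destruct k as [k [Hk Ck]]; simpl. split.
  - intros x y. rewrite Hk. apply Gadd_val.
  - intros F x HF Hx eps Heps.
    destruct (Ck F x HF Hx (pt_filter h) h (pt_is_filter h) (pt_conv h) eps Heps)
      as [A [Ph [HA [Hh Hall]]]].
    destruct HF as [_ [_ [Hup _]]].
    apply (Hup _ _ HA). intros y Ay. apply (Hall (k y) h Ay Hh).
Qed.

Definition ev (k : Gam G (GammaCH H)) (h : H) : Gam G TT :=
  exist _ (fun x => proj1_sig (proj1_sig k x) h) (ev_cont_hom k h).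

(* Continuous convergence makes evaluation jointly continuous. *)
Lemma ev_joint_cont (A : filt (Gam G (GammaCH H))) (B : filt H)
  (k : Gam G (GammaCH H)) (h : H) :
  is_filter B -> GammaS_conv G (GammaCH H) A k -> cconv H B h ->
  GammaS_conv G TT (filt_image2 ev A B) (ev k h).
Proof.
  intros HB Hk Hh x eps Heps.
  destruct (Hk x B h HB Hh eps Heps) as [P [Q [HP [HQ Hall]]]].
  exists (fun k' => P (proj1_sig k' x)), Q. split; [exact HP|]. split; [exact HQ|].
  intros k' h' Pk' Qh'. apply (Hall _ _ Pk' Qh').
Qed.

Lemma ev_image_compact (K : set (Gam G (GammaCH H))) (C : set H) :
  compact (GammaS_conv G (GammaCH H)) K -> compact (cconv H) C ->
  compact (GammaS_conv G TT) (image2 ev K C).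
Proof.
  apply compact_image2.
  - apply GammaS_conv_mono.
  - intros A B k h _ [HB _] Hk Hh. exact (ev_joint_cont A B k h HB Hk Hh).
Qed.

Lemma equicontinuous_of_slices (K : set (Gam G (GammaCH H))) :
  (forall B h, is_filter B -> cconv H B h ->
     exists C, B C /\ equicontinuous G TT (image2 ev K C)) ->
  equicontinuous G (GammaCH H) K.
Proof.
  intros Hsl F HF HF0 B h HB Hh eps Heps.
  destruct (Hsl B h HB Hh) as [C [HC Heq]].
  destruct (Heq F HF HF0 eps Heps) as [P [HP Hall]].
  exists (fun psi => exists k x, K k /\ P x /\ psi = proj1_sig k x), C.
  split; [|split; [exact HC|]].
  - exists P. split; [exact HP|]. intros psi y Kpsi Py. eauto.
  - intros psi y [k [x [Kk [Px ->]]]] Cy.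
    apply (Hall (ev k y) x); [exists k, y; auto | exact Px].
Qed.

End Evaluation.

Theorem theorem2p14 (G H : cgdata)
  (hG : is_cgroup G) (hGb : g_barrelled G)
  (hH : is_cgroup H) (hHlc : locally_compact (cconv H))
  (K : set (Gam G (GammaCH H)))
  (hK : compact (GammaS_conv G (GammaCH H)) K) :
  equicontinuous G (GammaCH H) K.
Proof.
  assert (pt_conv : forall h : H, cconv H (pt_filter h) h)
    by (destruct hH as [_ [_ [_ [_ [[Hpt _] _]]]]]; exact Hpt).
  apply (equicontinuous_of_slices G H pt_conv).
  intros B h HB Hh.
  destruct (proj2 hHlc B h HB Hh) as [C [HC Ccomp]].
  exists C. split; [exact HC|].
  apply hGb, ev_image_compact; assumption.
Qed.
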